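(* Let $\mathcal{H}_{A_1},\dots,\mathcal{H}_{A_N}$ be finite-dimensional Hilbert spaces and let $W_{A_1\cdots A_N}\in\mathcal{W}(\bigotimes_{i=1}^N\mathcal{H}_{A_i})$ be a beyond quantum state. Then there exists a semiquantum game $\mathbb{G}_{sq}$ and a choice of local measurements $M_{A_iA_i^o}$, $i=1,\dots,N$, such that the expected payoff obtained from $W_{A_1\cdots A_N}$ with these measurements is strictly negative, whereas for every density operator $\rho_{A_1\cdots A_N}\in\mathcal{D}(\bigotimes_{i=1}^N\mathcal{H}_{A_i})$ and every choice of local measurements (POVMs on $\mathcal{H}_{A_i}\otimes\mathcal{H}_{A_i^o}$ with outcome sets those of the game) the expected payoff is nonnegative. In short: $\mathcal{I}_{\mathbb{G}_{sq}}(W_{A_1\cdots A_N})<0$ while $\mathcal{I}_{\mathbb{G}_{sq}}(\rho_{A_1\cdots A_N})\ge0$ for all $\rho_{A_1\cdots A_N}\in\mathcal{D}(\bigotimes_{i=1}^N\mathcal{H}_{A_i})$.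
   Context: A POPT state on $\bigotimes_{i=1}^N\mathcal{H}_{A_i}$ is a Hermitian unit-trace operator $W$ with $\operatorname{Tr}[W(P_1\otimes\cdots\otimes P_N)]\ge0$ for all positive semidefinite $P_i$ on $\mathcal{H}_{A_i}$; the set of these is $\mathcal{W}(\bigotimes_i\mathcal{H}_{A_i})$. $\mathcal{D}(\bigotimes_i\mathcal{H}_{A_i})$ is the set of density operators. A beyond quantum state is an element of $\mathcal{W}\setminus\mathcal{D}$. An $N$-partite semiquantum game $\mathbb{G}_{sq}$ consists of finite-dimensional Hilbert spaces $\mathcal{H}_{A_i^o}$, finite families of pure states $\{\psi^{s_i}_{A_i^o}\}_{s_i\in\mathcal{S}_i}$ on $\mathcal{H}_{A_i^o}$ (quantum inputs), finite output sets $\mathcal{O}_i$, and a real payoff function $\beta:\times_{i=1}^N(\mathcal{S}_i\times\mathcal{O}_i)\to\mathbb{R}$. Given a (POPT or quantum) state $Z$ on $\bigotimes_i\mathcal{H}_{A_i}$ and POVMs $M_{A_iA_i^o}=\{\pi^{a_i}_{A_iA_i^o}\}_{a_i\in\mathcal{O}_i}$ on $\mathcal{H}_{A_i}\otimes\mathcal{H}_{A_i^o}$, the correlation is $p(a_1,\dots,a_N|\psi^{s_1},\dots,\psi^{s_N})=\operatorname{Tr}[(\bigotimes_i\pi^{a_i}_{A_iA_i^o})(Z\otimes\bigotimes_i\psi^{s_i}_{A_i^o})]$ (tensor factors reordered appropriately), and the expected payoff is $\mathcal{I}_{\mathbb{G}_{sq}}(Z)=\sum_{s_1,a_1,\dots,s_N,a_N}\beta(s_1,a_1,\dots,s_N,a_N)\,p(a_1,\dots,a_N|\psi^{s_1},\dots,\psi^{s_N})$.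 *)

From HB Require Import structures.
From mathcomp Require Import all_boot all_order all_algebra.
Set Implicit Arguments. Unset Strict Implicit. Unset Printing Implicit Defensive.
Import Order.TTheory GRing.Theory Num.Theory.
Local Open Scope ring_scope.

Section Defs.
Variable C : numClosedFieldType.

(* An operator on the Hilbert space C^T (T a finite index set = basis),
   given by its matrix entries. *)
Definition op (T : finType) := T -> T -> C.

Definition hermitian (T : finType) (A : op T) : Prop :=
  forall x y : T, A y x = (A x y)^*.

Definition psd (T : finType) (A : op T) : Prop :=
  hermitian A /\
  forall v : T -> C, 0 <= \sum_(x : T) \sum_(y : T) (v x)^* * A x y * v y.

Definition trace (T : finType) (A : op T) : C := \sum_(x : T) A x x.

Definition trace_mul (T : finType) (A B : op T) : C :=
  \sum_(x : T) \sum_(y : T) A x y * B y x.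

Definition density (T : finType) (A : op T) : Prop := psd A /\ trace A = 1.

Definition unit_vec (T : finType) (v : T -> C) : Prop :=
  \sum_(x : T) v x * (v x)^* = 1.
Definition proj (T : finType) (v : T -> C) : op T := fun x y => v x * (v y)^*.

Definition povm (T : finType) (n : nat) (pi : 'I_n -> op T) : Prop :=
  (forall a, psd (pi a)) /\
  (forall x y : T, \sum_(a < n) pi a x y = (x == y)%:R).

(* N-partite systems: party i has a Hilbert space of dimension d i,
   with basis 'I_(d i); the tensor product has basis tuples. *)
Definition tidx (N : nat) (d : 'I_N -> nat) : finType :=
  {dffun forall i : 'I_N, 'I_(d i)}.

Definition tensor_op (N : nat) (d : 'I_N -> nat)
  (P : forall i : 'I_N, op 'I_(d i)) : op (tidx d) :=
  fun x y => \prod_(i < N) P i (x i) (y i).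

Definition popt (N : nat) (d : 'I_N -> nat) (W : op (tidx d)) : Prop :=
  hermitian W /\ trace W = 1 /\
  forall P : forall i : 'I_N, op 'I_(d i),
    (forall i, psd (P i)) -> 0 <= trace_mul W (tensor_op P).

(* N-partite semiquantum game: party i gets quantum inputs psi i s
   (s in S_i = 'I_(ns i)), pure states on H_{A_i^o} = C^(dout i), and
   outputs in O_i = 'I_(no i); beta is the payoff function. *)
Record sqgame (N : nat) := SQGame {
  ns : 'I_N -> nat;
  no : 'I_N -> nat;
  dout : 'I_N -> nat;
  psi : forall i : 'I_N, 'I_(ns i) -> 'I_(dout i) -> C;
  beta : {dffun forall i : 'I_N, 'I_(ns i)} ->
         {dffun forall i : 'I_N, 'I_(no i)} -> C
}.
Arguments ns {N} G i : rename.
Arguments no {N} G i : rename.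
Arguments dout {N} G i : rename.
Arguments psi {N} G i s _ : rename.
Arguments beta {N} G s a : rename.

Definition valid_game (N : nat) (G : sqgame N) : Prop :=
  (forall i s, unit_vec (psi G i s)) /\
  (forall s a, beta G s a \is Num.real).

Definition local_meas (N : nat) (d : 'I_N -> nat) (G : sqgame N) :=
  forall i : 'I_N, 'I_(no G i) -> op ('I_(d i) * 'I_(dout G i))%type.

Definition valid_meas (N : nat) (d : 'I_N -> nat) (G : sqgame N)
  (M : local_meas d G) : Prop := forall i, povm (M i).

(* p(a | psi^s) = Tr[(pi^{a_1} (x) ... (x) pi^{a_N}) (Z (x) psi^{s_1} (x) ... )],
   the tensor factors being reordered as A_1 A_1^o ... A_N A_N^o;
   basis of the joint space: pairs (x, u), x in tidx d, u in tidx (dout G). *)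
Definition correlation (N : nat) (d : 'I_N -> nat) (G : sqgame N)
  (Z : op (tidx d)) (M : local_meas d G)
  (a : {dffun forall i : 'I_N, 'I_(no G i)})
  (s : {dffun forall i : 'I_N, 'I_(ns G i)}) : C :=
  \sum_(x : tidx d) \sum_(u : tidx (dout G))
  \sum_(y : tidx d) \sum_(w : tidx (dout G))
    (\prod_(i < N) M i (a i) (x i, u i) (y i, w i)) *
    (Z y x * \prod_(i < N) proj (psi G i (s i)) (w i) (u i)).

Definition payoff (N : nat) (d : 'I_N -> nat) (G : sqgame N)
  (Z : op (tidx d)) (M : local_meas d G) : C :=
  \sum_(s : {dffun forall i : 'I_N, 'I_(ns G i)})
  \sum_(a : {dffun forall i : 'I_N, 'I_(no G i)})
    beta G s a * correlation Z M a s.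

End Defs.

(* Since W is Hermitian with unit trace but not a density operator, <v|W|v> < 0 for some
   vector v.  The rank-one projectors onto |a> and (|a> + i^k |b>)/sqrt 2 span every matrix
   unit |a><b|, so Q := |conj v><conj v| = sum_s c_s (x)_i |psi_(s_i)><psi_(s_i)| for
   complex weights c_s.  The game pays Re c_s on input s when every party answers
   [accept]; hence, whenever the answer probabilities are real, the expected payoff is
   Re Tr[((x)_i pi_i) (Z (x) Q)], where pi_i is the [accept] effect of party i.  For a
   density operator and any POVMs this is the trace of a product of positive operators,
   hence >= 0.  If pi_i projects onto the maximally entangled vector of A_i A_i^o, the
   trace collapses to <v|Z|v> / prod_i d_i, which is < 0 for Z = W; the probabilities
   are then >= 0 because W is a POPT state. *)

From Pilot Require Import Defs.
From mathcomp Require Import all_boot all_order all_algebra.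
From mathcomp Require Import ring.
From Stdlib Require Import Classical.
Set Implicit Arguments. Unset Strict Implicit. Unset Printing Implicit Defensive.
Import Order.TTheory GRing.Theory Num.Theory.
Local Open Scope ring_scope.

Lemma bigA_distr_dffun (R : comPzSemiRingType) (I : finType) (J : I -> finType)
    (F : forall i, J i -> R) :
  \prod_i \sum_(j : J i) F i j = \sum_(f : {dffun forall i, J i}) \prod_i F i (f i).
Proof.
pose G i := [ffun j : J i => F i j].
rewrite [RHS](reindex (@dffun_of_fprod I J)); last exact/onW_bij/dffun_of_fprod_bij.
transitivity (\sum_(t : fprod J) \prod_(i in I) G i (t i)); last first.
  by apply: eq_bigr => f _; apply: eq_bigr => i _; rewrite ffunE /dffun_of_fprod ffunE.
rewrite big_fprod -(bigA_distr_big_dep (fun i => tagged_with J i) (fun i => untag 0 (G i))).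
apply: eq_bigr => i _; rewrite -(big_tag (fun i j => G i j)).
by apply: eq_bigr => j _; rewrite ffunE.
Qed.

Lemma sum_enum_val (R : nmodType) (T : finType) (F : T -> R) :
  \sum_x F x = \sum_(i < #|T|) F (enum_val i).
Proof. by rewrite -(big_enum_val (A := predT)); apply: eq_bigl. Qed.

Lemma sum_delta (R : pzSemiRingType) (T : finType) (t : T) (F : T -> R) :
  \sum_x (x == t)%:R * F x = F t.
Proof.
rewrite (bigD1 t) //= eqxx mul1r big1 ?addr0 // => x /negbTE->.
by rewrite mul0r.
Qed.

Lemma prod_eq_dffun (R : comPzSemiRingType) (I : finType) (T_ : I -> finType)
    (x y : {dffun forall i, T_ i}) :
  \prod_i ((x i == y i)%:R : R) = (x == y)%:R.
Proof.
have [->|neq_xy] := eqVneq x y; first by apply: big1 => i _; rewrite eqxx.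
have [i neq_i] : exists i, x i != y i.
  apply/existsP; rewrite -negb_forall; apply: contra neq_xy => /forallP eq_xy.
  by apply/eqP/ffunP => i; apply/eqP.
by rewrite (bigD1 i) //= (negbTE neq_i) mul0r.
Qed.

Section PositiveOperators.
Variable C : numClosedFieldType.
Implicit Types T : finType.

Definition gram_op (I T : finType) (g : I -> T -> C) : op C T :=
  fun x y => \sum_k g k x * (g k y)^*.

Lemma eq_psd T (A B : op C T) : A =2 B -> psd A -> psd B.
Proof.
move=> eqAB [hA pA]; split=> [x y|v]; first by rewrite -!eqAB.
by under eq_bigr do under eq_bigr do rewrite -eqAB.
Qed.

Lemma psd_gram_op (I T : finType) (g : I -> T -> C) : psd (gram_op g).
Proof.
split=> [x y|v].
  rewrite /gram_op rmorph_sum; apply: eq_bigr => k _.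
  by rewrite rmorphM /= conjCK mulrC.
pose a k := \sum_x (v x)^* * g k x.
have -> : \sum_x \sum_y (v x)^* * gram_op g x y * v y = \sum_k a k * (a k)^*.
  under eq_bigr do under eq_bigr do rewrite mulr_sumr mulr_suml.
  under eq_bigr do rewrite exchange_big /=.
  rewrite exchange_big /=; apply: eq_bigr => k _.
  rewrite /a rmorph_sum big_distrlr /=; apply: eq_bigr => x _; apply: eq_bigr => y _.
  by rewrite rmorphM /= conjCK; ring.
by apply: sumr_ge0 => k _; apply: mul_conjC_ge0.
Qed.

Section Spectral.
Local Open Scope sesquilinear_scope.

Lemma psd_gram T (A : op C T) :
  psd A -> exists g : 'I_#|T| -> T -> C, A =2 gram_op g.
Proof.
move=> [hA pA].
pose Am : 'M[C]_#|T| := \matrix_(i, j) A (enum_val i) (enum_val j).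
have Am_herm : Am^t* = Am by apply/matrixP => i j; rewrite !mxE -hA.
have Am_normal : Am \is normalmx by apply/normalmxP; rewrite Am_herm.
set P := spectralmx Am; set l := spectral_diag Am.
have P_unitary : P \is unitarymx := spectral_unitarymx Am.
have AmE : Am = P^t* *m diag_mx l *m P.
  by rewrite {1}(orthomx_spectralP Am_normal) -/P -/l invmx_unitary.
have l_ge0 k : 0 <= l 0 k.
  have -> : l 0 k = (P *m Am *m P^t*) k k.
    rewrite AmE !mulmxA (unitarymxP P_unitary) mul1mx -mulmxA.
    by rewrite (unitarymxP P_unitary) mulmx1 mxE eqxx mulr1n.
  have := pA (fun x => (P k (enum_rank x))^*).
  rewrite sum_enum_val; under eq_bigr do rewrite sum_enum_val.
  rewrite exchange_big mxE; congr (0 <= _); apply: eq_bigr => j _.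
  rewrite mxE big_distrl; apply: eq_bigr => i _.
  by rewrite !mxE !enum_valK conjCK.
exists (fun k x => sqrtC (l 0 k) * (P k (enum_rank x))^*) => x y.
have -> : A x y = Am (enum_rank x) (enum_rank y) by rewrite mxE !enum_rankK.
rewrite AmE mul_mx_diag !mxE; apply: eq_bigr => k _.
have sqrt_real : (sqrtC (l 0 k))^* = sqrtC (l 0 k) by rewrite geC0_conj ?sqrtC_ge0.
rewrite !mxE rmorphM /= conjCK sqrt_real -[in LHS](sqrtCK (l 0 k)).
by rewrite expr2; ring.
Qed.

End Spectral.

Lemma psd_mul T (A B : op C T) : psd A -> psd B -> psd (fun x y => A x y * B x y).
Proof.
move=> /psd_gram[g Ag] /psd_gram[h Bh].
apply: (@eq_psd _ (gram_op (fun kl x => g kl.1 x * h kl.2 x))); last exact: psd_gram_op.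
move=> x y; rewrite Ag Bh /gram_op big_distrlr pair_bigA /=.
by apply: eq_bigr => -[k l] _ /=; rewrite rmorphM /=; ring.
Qed.

Lemma psd_comp T T' (f : T -> T') (A : op C T') :
  psd A -> psd (fun x y => A (f x) (f y)).
Proof.
move=> /psd_gram[g Ag].
apply: (@eq_psd _ (gram_op (fun k x => g k (f x)))); last exact: psd_gram_op.
by move=> x y; rewrite Ag.
Qed.

Lemma psd_proj T (v : T -> C) : psd (proj v).
Proof.
apply: (@eq_psd _ (gram_op (fun _ : unit => v))); last exact: psd_gram_op.
by move=> x y; rewrite /gram_op (big_pred1 tt).
Qed.

Lemma psd_prod (I T : finType) (A : I -> op C T) :
  (forall i, psd (A i)) -> psd (fun x y => \prod_i A i x y).
Proof.
move=> psdA; elim: (index_enum I) => [|i r IHr].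
  apply: (@eq_psd _ (proj (fun=> 1))); last exact: psd_proj.
  by move=> x y; rewrite big_nil /proj rmorph1 mulr1.
apply: (@eq_psd _ (fun x y => A i x y * \prod_(j <- r) A j x y)); last exact: psd_mul.
by move=> x y; rewrite big_cons.
Qed.

Lemma psd_tensor_op N (d : 'I_N -> nat) (P : forall i, op C 'I_(d i)) :
  (forall i, psd (P i)) -> psd (tensor_op P).
Proof.
move=> psdP; apply: (@psd_prod _ _ (fun i (x y : tidx d) => P i (x i) (y i))) => i.
exact: (psd_comp (fun x : tidx d => x i) (psdP i)).
Qed.

Lemma trace_mul_psd_ge0 T (A B : op C T) : psd A -> psd B -> 0 <= trace_mul A B.
Proof.
move=> /psd_gram[g Ag] /psd_gram[h Bh].
pose a k l := \sum_x g k x * (h l x)^*.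
have -> : trace_mul A B = \sum_k \sum_l a k l * (a k l)^*.
  rewrite /trace_mul; under eq_bigr do under eq_bigr do rewrite Ag Bh big_distrlr /=.
  under eq_bigr do rewrite exchange_big /=.
  under eq_bigr do under eq_bigr do rewrite exchange_big /=.
  rewrite exchange_big; apply: eq_bigr => k _; rewrite exchange_big; apply: eq_bigr => l _.
  rewrite /a rmorph_sum big_distrlr; apply: eq_bigr => x _; apply: eq_bigr => y _.
  by rewrite rmorphM /= conjCK; ring.
by apply: sumr_ge0 => k _; apply: sumr_ge0 => l _; apply: mul_conjC_ge0.
Qed.

(* A bare [hermitian] would denote MathComp's notation for hermitian forms. *)
Lemma psd_idem T (A : op C T) :
  Defs.hermitian A -> (forall x y, \sum_z A x z * A z y = A x y) -> psd A.
Proof.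
move=> hA idemA; apply: (@eq_psd _ (gram_op (fun k x => A x k))); last exact: psd_gram_op.
by move=> x y; rewrite -idemA; apply: eq_bigr => z _; rewrite -hA.
Qed.

Lemma psd_id_sub_proj T (v : T -> C) :
  unit_vec v -> psd (fun x y => (x == y)%:R - proj v x y).
Proof.
move=> v_unit; apply: psd_idem => [x y|x y].
  by rewrite rmorphB /= rmorph_nat /proj rmorphM /= conjCK eq_sym mulrC.
pose G z := (z == y)%:R - proj v z y.
have orthG : \sum_z (v z)^* * G z = 0.
  rewrite /G /proj; under eq_bigr => z _.
    by rewrite mulrBr mulrA [(v z)^* * _%:R]mulrC [(v z)^* * v z]mulrC; over.
  by rewrite sumrB -big_distrl /= sum_delta v_unit mul1r subrr.
transitivity (\sum_z (z == x)%:R * G z - v x * \sum_z (v z)^* * G z).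
  by rewrite mulr_sumr -sumrB; apply: eq_bigr => z _; rewrite eq_sym /G /proj; ring.
by rewrite sum_delta orthG mulr0 subr0.
Qed.

Definition proj_test T (v : T -> C) (a : 'I_2) : op C T :=
  if a == ord0 then proj v else fun x y => (x == y)%:R - proj v x y.

Lemma povm_proj_test T (v : T -> C) : unit_vec v -> povm (proj_test v).
Proof.
move=> v_unit; split=> [a|x y].
  by rewrite /proj_test; case: ifP => _; [apply: psd_proj | apply: psd_id_sub_proj].
by rewrite !big_ord_recl big_ord0 /proj_test /= addr0 addrC subrK.
Qed.

Lemma proj_conj T (v : T -> C) x y : proj (fun z => (v z)^*) x y = proj v y x.
Proof. by rewrite /proj conjCK mulrC. Qed.

Lemma trace_mul_proj T (A : op C T) (v : T -> C) :
  trace_mul A (proj v) = \sum_x \sum_y (v x)^* * A x y * v y.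
Proof. by apply: eq_bigr => x _; apply: eq_bigr => y _; rewrite /proj; ring. Qed.

Lemma not_psd_witness T (A : op C T) :
  Defs.hermitian A -> ~ psd A -> exists v, \sum_x \sum_y (v x)^* * A x y * v y < 0.
Proof.
move=> hA not_psdA.
have [v /negP form_lt0] : exists v, ~ (0 <= \sum_x \sum_y (v x)^* * A x y * v y).
  by apply: not_all_ex_not => psdA; apply: not_psdA.
exists v; rewrite real_ltNge ?real0 //; apply/CrealP.
rewrite rmorph_sum exchange_big; apply: eq_bigr => y _.
rewrite rmorph_sum; apply: eq_bigr => x _.
by rewrite !rmorphM /= conjCK -hA; ring.
Qed.

End PositiveOperators.

Notation tomo_index n := ('I_n * 'I_n * 'I_4)%type.

Section Tomography.
Variable C : numClosedFieldType.

Definition theta (k : 'I_4) : C := 'i ^+ k.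

Lemma theta_unit k : theta k * (theta k)^* = 1.
Proof. by rewrite /theta rmorphXn /= conjCi -exprMn mulrN -expr2 sqrCi opprK expr1n. Qed.

Lemma sum_theta : \sum_k theta k = 0.
Proof.
by rewrite !big_ord_recr big_ord0 /= /theta /= !exprS expr0 !mulr1 -expr2 sqrCi; ring.
Qed.

Lemma sum_theta_sqr : \sum_k theta k ^+ 2 = 0.
Proof.
rewrite (eq_bigr (fun k : 'I_4 => (-1) ^+ k)) => [|k _]; last first.
  by rewrite /theta -exprM mulnC exprM sqrCi.
by rewrite !big_ord_recr big_ord0 /= !exprS expr0; ring.
Qed.

Lemma polarization (al be ga de : C) :
  \sum_k theta k / 4%:R * ((al + theta k * be) * (ga + (theta k)^* * de)) = al * de.
Proof.
have termE k : theta k / 4%:R * ((al + theta k * be) * (ga + (theta k)^* * de)) =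
    4%:R^-1 * (theta k * (al * ga + be * de) + al * de + theta k ^+ 2 * (be * ga)).
  transitivity (4%:R^-1 * (theta k * (al * ga) + theta k * (theta k)^* * (al * de) +
      theta k ^+ 2 * (be * ga) + theta k * (theta k * (theta k)^*) * (be * de))).
    by ring.
  by rewrite theta_unit mulr1; ring.
rewrite (eq_bigr _ (fun k _ => termE k)) -mulr_sumr !big_split /= -!mulr_suml.
rewrite sum_theta sum_theta_sqr sumr_const card_ord !mul0r add0r addr0.
by field.
Qed.

Variable n : nat.

(* Polarization: |a><b| = 1/4 sum_k i^k (|a> + i^k |b>)(<a| + i^-k <b|); for a != b the
   vectors have norm sqrt 2, and for a = b the basis vector |a> alone is used. *)
Definition tomo_state (t : tomo_index n) : 'I_n -> C :=
  let: (a, b, k) := t in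
  if a == b then fun w => (w == a)%:R
  else fun w => sqrtC 2^-1 * ((w == a)%:R + theta k * (w == b)%:R).

Definition tomo_coef (a b : 'I_n) (t : tomo_index n) : C :=
  (t.1 == (a, b))%:R * (if a == b then (t.2 == ord0)%:R else theta t.2 / 2).

Lemma sqrt_half_norm : sqrtC 2^-1 * (sqrtC 2^-1)^* = 2^-1 :> C.
Proof. by rewrite geC0_conj ?sqrtC_ge0 ?invr_ge0 ?ler0n // -expr2 sqrtCK. Qed.

Lemma tomo_state_unit t : unit_vec (tomo_state t).
Proof.
case: t => [[a b] k]; rewrite /unit_vec /=; case: eqVneq => [->|neq_ab].
  by rewrite sum_delta eqxx rmorph1.
transitivity (\sum_w ((w == a)%:R * 2^-1 + (w == b)%:R * (2^-1 * (theta k * (theta k)^*)))).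
  apply: eq_bigr => w _.
  transitivity (sqrtC 2^-1 * (sqrtC 2^-1)^* *
      (((w == a)%:R + theta k * (w == b)%:R) * ((w == a)%:R + (theta k)^* * (w == b)%:R))).
    by rewrite !(rmorphM, rmorphD) /= !rmorph_nat; ring.
  rewrite sqrt_half_norm.
  have [->|_] := eqVneq w a.
    by rewrite (negbTE neq_ab) /=; ring.
  by case: (w == b) => /=; ring.
by rewrite big_split /= !sum_delta theta_unit; field.
Qed.

Lemma tomo_decomp (a b w u : 'I_n) :
  \sum_t tomo_coef a b t * proj (tomo_state t) w u = (w == a)%:R * (u == b)%:R.
Proof.
transitivity (\sum_p \sum_k (p == (a, b))%:R *
    ((if a == b then (k == ord0)%:R else theta k / 2) * proj (tomo_state (p, k)) w u)).
  by rewrite pair_bigA; apply: eq_bigr => -[p k] _; rewrite /tomo_coef mulrA.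
under eq_bigr do rewrite -big_distrr /=.
rewrite sum_delta /proj /=; case: eqVneq => [<-|_]; first by rewrite sum_delta rmorph_nat.
rewrite -(polarization (w == a)%:R (w == b)%:R (u == a)%:R (u == b)%:R).
apply: eq_bigr => k _; rewrite !(rmorphM, rmorphD) /= !rmorph_nat.
transitivity (theta k / 2 * (sqrtC 2^-1 * (sqrtC 2^-1)^*) *
   (((w == a)%:R + theta k * (w == b)%:R) * ((u == a)%:R + (theta k)^* * (u == b)%:R))).
  by ring.
by rewrite sqrt_half_norm; field.
Qed.

End Tomography.

Section TensorDecomposition.
Variables (C : numClosedFieldType) (N : nat) (d : 'I_N -> nat) (J : 'I_N -> finType).
Variable phi : forall i, J i -> 'I_(d i) -> C.
Variable gamma : forall i, 'I_(d i) -> 'I_(d i) -> J i -> C.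
Hypothesis local_decomp : forall i (a b w u : 'I_(d i)),
  \sum_j gamma a b j * proj (phi j) w u = (w == a)%:R * (u == b)%:R.

Definition tensor_coef (Q : op C (tidx d)) (s : {dffun forall i, J i}) : C :=
  \sum_x \sum_y Q x y * \prod_i gamma (x i) (y i) (s i).

Lemma tensor_decomp (Q : op C (tidx d)) (w u : tidx d) :
  \sum_s tensor_coef Q s * tensor_op (fun i => proj (phi (s i))) w u = Q w u.
Proof.
under eq_bigr do rewrite /tensor_coef big_distrl /=.
under eq_bigr do under eq_bigr do rewrite big_distrl /=.
rewrite exchange_big; under eq_bigr do rewrite exchange_big /=.
transitivity (\sum_x \sum_y (x == w)%:R * ((y == u)%:R * Q x y)).
  apply: eq_bigr => x _; apply: eq_bigr => y _.
  under eq_bigr do rewrite -mulrA -big_split /=.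
  rewrite -big_distrr -(bigA_distr_dffun (fun i j => gamma (x i) (y i) j * proj (phi j) (w i) (u i))) /=.
  under eq_bigr do rewrite local_decomp.
  by rewrite big_split /= !prod_eq_dffun eq_sym [u == y]eq_sym; ring.
by under eq_bigr do rewrite -big_distrr /=; rewrite sum_delta sum_delta.
Qed.

End TensorDecomposition.

Section MeasuredTrace.
Variables (C : numClosedFieldType) (N : nat) (d dd : 'I_N -> nat).
Implicit Types (Z : op C (tidx d)) (Q : op C (tidx dd)).
Implicit Types P : forall i, op C ('I_(d i) * 'I_(dd i))%type.

(* [joint_op P] is (x)_i P i with its factors reordered from A_1 A_1^o ... A_N A_N^o to
   A_1 ... A_N A_1^o ... A_N^o, so that [meas_trace Z P Q] is Tr[((x)_i P i) (Z (x) Q)]. *)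
Definition joint_op P : op C (tidx d * tidx dd)%type :=
  fun p q => \prod_i P i (p.1 i, p.2 i) (q.1 i, q.2 i).

Definition meas_trace Z P Q : C :=
  trace_mul (joint_op P) (fun p q => Z p.1 q.1 * Q p.2 q.2).

Lemma psd_joint_op P : (forall i, psd (P i)) -> psd (joint_op P).
Proof.
move=> psdP; apply: (@psd_prod _ _ _ (fun i (p q : (tidx d * tidx dd)%type) =>
  P i (p.1 i, p.2 i) (q.1 i, q.2 i))) => i.
exact: (psd_comp (fun p : (tidx d * tidx dd)%type => (p.1 i, p.2 i)) (psdP i)).
Qed.

Lemma meas_trace_ge0 Z P Q :
  psd Z -> (forall i, psd (P i)) -> psd Q -> 0 <= meas_trace Z P Q.
Proof.
move=> psdZ psdP psdQ; apply: trace_mul_psd_ge0; first exact: psd_joint_op.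
exact: psd_mul (psd_comp fst psdZ) (psd_comp snd psdQ).
Qed.

Lemma eq_meas_trace Z P P' Q :
  (forall i, P i =2 P' i) -> meas_trace Z P Q = meas_trace Z P' Q.
Proof.
move=> eqP; apply: eq_bigr => p _; apply: eq_bigr => q _; congr (_ * _).
by apply: eq_bigr => i _; rewrite eqP.
Qed.

Lemma meas_trace_sum (S : finType) Z P Q (c : S -> C) (R : S -> op C (tidx dd)) :
  (forall w u, Q w u = \sum_s c s * R s w u) ->
  meas_trace Z P Q = \sum_s c s * meas_trace Z P (R s).
Proof.
move=> QE; rewrite /meas_trace /trace_mul.
under [RHS]eq_bigr do rewrite big_distrr /=.
under [RHS]eq_bigr do under eq_bigr do rewrite big_distrr /=.
rewrite [RHS]exchange_big; apply: eq_bigr => p _; rewrite exchange_big; apply: eq_bigr => q _.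
by rewrite QE !big_distrr; apply: eq_bigr => s _; rewrite [RHS]mulrCA [X in _ = _ * X]mulrCA.
Qed.

End MeasuredTrace.

Lemma correlationE (C : numClosedFieldType) N (d : 'I_N -> nat) (G : sqgame C N)
    (Z : op C (tidx d)) (M : local_meas d G) a s :
  correlation Z M a s =
  meas_trace Z (fun i => M i (a i)) (tensor_op (fun i => proj (psi (s i)))).
Proof.
rewrite /correlation /meas_trace /trace_mul pair_bigA; apply: eq_bigr => -[x u] _.
by rewrite pair_bigA; apply: eq_bigr => -[y w] _.
Qed.

Definition maxent (C : numClosedFieldType) (n : nat) : 'I_n * 'I_n -> C :=
  fun p => (p.1 == p.2)%:R / sqrtC n%:R.
Arguments maxent {C} n.

Section MaximallyEntangled.
Variable C : numClosedFieldType.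

Lemma proj_maxent n p q :
  proj (maxent n) p q = (p.1 == p.2)%:R * (q.1 == q.2)%:R / n%:R :> C.
Proof.
have sqrt_real : (sqrtC n%:R)^* = sqrtC n%:R :> C by rewrite geC0_conj ?sqrtC_ge0 ?ler0n.
rewrite /proj /maxent rmorphM fmorphV /= rmorph_nat sqrt_real.
by rewrite mulrACA -invfM -expr2 sqrtCK.
Qed.

Lemma maxent_unit n : (0 < n)%N -> unit_vec (@maxent C n).
Proof.
move=> n_gt0; rewrite /unit_vec.
have -> : \sum_p maxent n p * (maxent n p)^* = \sum_p proj (maxent n) p p by [].
under eq_bigr do rewrite proj_maxent; rewrite -big_distrl /=.
transitivity ((\sum_(a < n) \sum_(b < n) (b == a)%:R * (a == b)%:R) / n%:R : C).
  by rewrite pair_bigA; congr (_ / _); apply: eq_bigr => -[a b] _; rewrite eq_sym.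
under eq_bigr do rewrite sum_delta eqxx.
by rewrite sumr_const card_ord -[1 *+ n]/(n%:R) divff // pnatr_eq0 -lt0n.
Qed.

Lemma meas_trace_maxent N (d : 'I_N -> nat) (Z Q : op C (tidx d)) :
  meas_trace Z (fun i => proj (maxent (d i))) Q =
  (\prod_i (d i)%:R)^-1 * trace_mul Z (fun x y => Q y x).
Proof.
set c := (\prod_i (d i)%:R)^-1.
transitivity (\sum_(x : tidx d) \sum_(u : tidx d) \sum_(y : tidx d) \sum_(w : tidx d)
    (w == y)%:R * ((u == x)%:R * (c * (Z y x * Q w u)))).
  rewrite /meas_trace /trace_mul [RHS]pair_bigA; apply: eq_bigr => -[x u] _.
  rewrite [RHS]pair_bigA; apply: eq_bigr => -[y w] _ /=.
  rewrite /joint_op /=; under eq_bigr do rewrite proj_maxent /=.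
  by rewrite !big_split /= !prod_eq_dffun prodfV -/c [x == u]eq_sym [y == w]eq_sym; ring.
rewrite /trace_mul [X in c * X]exchange_big mulr_sumr; apply: eq_bigr => x _.
under [LHS]eq_bigr do under eq_bigr do rewrite sum_delta.
by rewrite exchange_big mulr_sumr; apply: eq_bigr => y _; rewrite sum_delta.
Qed.

End MaximallyEntangled.

Lemma trace_dim_gt0 (C : numClosedFieldType) N (d : 'I_N -> nat) (A : op C (tidx d)) i :
  trace A != 0 -> (0 < d i)%N.
Proof.
apply: contraR; rewrite -eqn0Ngt => /eqP d_i0.
by apply/eqP/big1 => x; move: (x i); rewrite d_i0 => -[].
Qed.

Lemma popt_tensor_proj_ge0 (C : numClosedFieldType) N (d : 'I_N -> nat) (W : op C (tidx d))
    (v : forall i, 'I_(d i) -> C) :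
  popt W -> 0 <= trace_mul W (fun x y => tensor_op (fun i => proj (v i)) y x).
Proof.
move=> [_ [_ poptW]].
have := poptW (fun i => proj (fun z => (v i z)^*)) (fun i => psd_proj _).
congr (0 <= _); apply: eq_bigr => x _; apply: eq_bigr => y _; congr (_ * _).
by apply: eq_bigr => i _; rewrite proj_conj.
Qed.

Section WitnessGame.
Variables (C : numClosedFieldType) (N : nat) (d : 'I_N -> nat).

Definition tomo_input i := #|{: tomo_index (d i)}|.

Definition tomo_coef_input i (a b : 'I_(d i)) (s : 'I_(tomo_input i)) : C :=
  tomo_coef C a b (enum_val s).

Definition accept : {dffun forall i : 'I_N, 'I_2} := [ffun => ord0].

Definition witness_game (Q : op C (tidx d)) : sqgame C N :=
  @SQGame C N tomo_input (fun=> 2%N) d (fun i s => tomo_state C (enum_val s))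
    (fun s a => (a == accept)%:R * 'Re (tensor_coef tomo_coef_input Q s)).

Lemma witness_game_valid (Q : op C (tidx d)) : valid_game (witness_game Q).
Proof. by split=> [i s|s a]; [apply: tomo_state_unit | rewrite realM ?realn ?Creal_Re]. Qed.

Lemma maxent_test_valid (Q : op C (tidx d)) :
  (forall i, 0 < d i)%N ->
  valid_meas (G := witness_game Q) (fun i => proj_test (maxent (d i))).
Proof. by move=> d_gt0 i; apply/povm_proj_test/maxent_unit. Qed.

Lemma witness_game_decomp (Q : op C (tidx d)) w u :
  \sum_s tensor_coef tomo_coef_input Q s *
    tensor_op (fun i => proj (tomo_state C (enum_val (s i)))) w u = Q w u.
Proof.
apply: (tensor_decomp (phi := fun i s => tomo_state C (enum_val s))) => i a b w' u'.
by rewrite -tomo_decomp [RHS]sum_enum_val.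
Qed.

Lemma payoff_witness_gameE (Q Z : op C (tidx d)) (M : local_meas d (witness_game Q)) :
  (forall s, 0 <= correlation Z M accept s) ->
  payoff Z M = 'Re (meas_trace Z (fun i => M i (accept i)) Q).
Proof.
move=> corr_ge0.
rewrite (meas_trace_sum _ _ (fun w u => esym (witness_game_decomp Q w u))) raddf_sum.
apply: eq_bigr => s _; under eq_bigr do rewrite -mulrA.
by rewrite sum_delta -ReMr ?ger0_real // correlationE.
Qed.

Lemma payoff_witness_game_ge0 (Q rho : op C (tidx d)) (M : local_meas d (witness_game Q)) :
  psd Q -> psd rho -> valid_meas M -> 0 <= payoff rho M.
Proof.
move=> psdQ psd_rho validM; have psdM i a : psd (M i a) := (validM i).1 a.
rewrite payoff_witness_gameE => [|s]; last first.
  rewrite correlationE; apply: meas_trace_ge0 => //.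
  by apply: psd_tensor_op => i; apply: psd_proj.
have trace_ge0 : 0 <= meas_trace rho (fun i => M i (accept i)) Q by apply: meas_trace_ge0.
by rewrite (Creal_ReP _ (ger0_real trace_ge0)).
Qed.

Lemma meas_trace_maxent_test (Z Q : op C (tidx d)) :
  meas_trace Z (fun i => proj_test (maxent (d i)) (accept i)) Q =
  (\prod_i (d i)%:R)^-1 * trace_mul Z (fun x y => Q y x).
Proof.
rewrite -meas_trace_maxent; apply: eq_meas_trace => i p q.
by rewrite /accept ffunE /proj_test eqxx.
Qed.

Lemma payoff_witness_game_lt0 (W : op C (tidx d)) (v : tidx d -> C) :
  popt W -> (forall i, 0 < d i)%N -> \sum_x \sum_y (v x)^* * W x y * v y < 0 ->
  payoff (G := witness_game (proj (fun x => (v x)^*))) W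
    (fun i => proj_test (maxent (d i))) < 0.
Proof.
move=> poptW d_gt0 form_lt0.
have c_gt0 : 0 < (\prod_i (d i)%:R)^-1 :> C.
  by rewrite invr_gt0 prodr_gt0 // => i _; rewrite ltr0n.
rewrite payoff_witness_gameE => [|s]; rewrite ?correlationE meas_trace_maxent_test; last first.
  exact/mulr_ge0/popt_tensor_proj_ge0/poptW/ltW.
have -> : trace_mul W (fun x y => proj (fun z => (v z)^*) y x) =
    \sum_x \sum_y (v x)^* * W x y * v y.
  by rewrite -trace_mul_proj; apply: eq_bigr => x _; apply: eq_bigr => y _; rewrite proj_conj.
rewrite (Creal_ReP _ _) ?pmulr_rlt0 //.
by apply: realM; [apply: gtr0_real | apply: ltr0_real].
Qed.

End WitnessGame.

Theorem theorem2 (C : numClosedFieldType) (N : nat) (d : 'I_N -> nat)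
  (W : op C (tidx d)) :
  popt W -> ~ density W ->
  exists (G : sqgame C N) (M : local_meas d G),
    valid_game G /\ valid_meas M /\
    payoff W M < 0 /\
    forall (rho : op C (tidx d)) (M' : local_meas d G),
      density rho -> valid_meas M' -> 0 <= payoff rho M'.
Proof.
move=> poptW not_densW; have [hermW [trW _]] := poptW.
have d_gt0 i : (0 < d i)%N by apply: (trace_dim_gt0 (A := W)); rewrite trW oner_neq0.
have [v form_lt0] := not_psd_witness hermW (fun psdW => not_densW (conj psdW trW)).
exists (witness_game (proj (fun x => (v x)^*))), (fun i => proj_test (maxent (d i))).
split; first exact: witness_game_valid.
split; first exact: maxent_test_valid.
split; first exact: payoff_witness_game_lt0.
by move=> rho M [psd_rho _]; apply: payoff_witness_game_ge0 (psd_proj _) psd_rho.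
Qed.
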